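(* For integers $n>3$ and $k\ge1$, $F_{3,k}(n)=0$ if and only if $(k,n)\in\{(3,6),(5,6),(5,27),(9,27),(9,486)\}$. In particular $F_{3,k}$ has no positive integer root for $k>12$, and $F_{3,5}(x)=\tfrac12(x-6)(x-27)$, $F_{3,9}(x)=\tfrac12(x-27)(x-486)$.
   Context: For an integer $j\ge0$, $\binom{x}{j}=x(x-1)\cdots(x-j+1)/j!$ as a polynomial in $x$, and $\binom{x}{j}=0$ for $j<0$. For integers $s\ge1$, $k\ge1$, the Moser polynomial is $F_{s,k}(x)=\sum_{p=1}^{s}(-1)^{p-1}p^{k-1}\binom{x}{s-p}$; in particular $2F_{3,k}(x)=x^2-(2^k+1)x+2\cdot3^{k-1}$. *)

From HB Require Import structures.
From mathcomp Require Import all_boot all_order all_algebra.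
Set Implicit Arguments. Unset Strict Implicit. Unset Printing Implicit Defensive.
Import Order.TTheory GRing.Theory Num.Theory.
Local Open Scope ring_scope.

Definition binpoly (j : nat) : {poly rat} :=
  (j`!%:R)^-1 *: \prod_(i < j) ('X - (i%:R)%:P).

(* Moser polynomial F_{s,k}(x) = sum_{p=1}^s (-1)^(p-1) p^(k-1) binom(x, s-p).
   Since 1 <= p <= s, s - p >= 0, so the convention binom(x,j)=0 for j<0 is never used. *)
Definition moser (s k : nat) : {poly rat} :=
  \sum_(1 <= p < s.+1) ((-1) ^+ (p.-1) * (p%:R) ^+ (k.-1)) *: binpoly (s - p).

(* Twice the Moser polynomial F_{3,k} is x^2 - (2^k + 1) x + 2 3^(k-1), so an integer
   root n satisfies n (2^k + 1 - n) = 2 3^(k-1): up to order the two factors are 3^x and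
   2 3^y with x + y = k - 1 and 3^x + 2 3^y = 2^k + 1.  Then 3^(min x y) divides 2^k + 1,
   and lifting the exponent (v_3(2^k + 1) <= 1 + v_3(k)) bounds it by 3k, while
   3^(max x y) <= 2^k + 1.  Hence 3^(k-1) <= 3k (2^k + 1), forcing k <= 11; the remaining
   cases are decided by computation. *)

From mathcomp Require Import all_boot all_order all_algebra.
From mathcomp Require Import ring zify.
Import GRing.Theory Num.Theory.

Set Implicit Arguments.
Unset Strict Implicit.

Section LiftingTheExponent.
Local Open Scope ring_scope.

Lemma exprDn_first_order (R : comPzRingType) (a m w : R) t :
  exists q, (a + m * w) ^+ t.+1 = a ^+ t.+1 + t.+1%:R * a ^+ t * m * w + m ^+ 2 * q.
Proof.
elim: t => [|t [q IHq]]; first by exists 0; rewrite !expr1 expr0; ring.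
exists (a * q + t.+1%:R * a ^+ t * w ^+ 2 + m * w * q).
by rewrite exprS IHq !exprS -[t.+2]addn1 natrD; ring.
Qed.

Lemma exp2_exp3_add1 j :
  exists2 w : int, 2 ^+ (3 ^ j) + 1 = 3 ^+ j.+1 * w & ~~ (3 %| w)%Z.
Proof.
elim: j => [|j [w Hw w3]]; first by exists 1.
set M : int := 3 ^+ j.
exists (w - 3 * M * w ^+ 2 + 3 * M ^+ 2 * w ^+ 3).
  have -> : (2 : int) ^+ (3 ^ j.+1) = (3 * M * w - 1) ^+ 3.
    rewrite expnS mulnC exprM; congr (_ ^+ 3).
    by apply/(addIr 1); rewrite Hw exprS; ring.
  by rewrite !exprS; ring.
apply: contra w3 => w'3.
have -> : w = (w - 3 * M * w ^+ 2 + 3 * M ^+ 2 * w ^+ 3)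
              - 3 * (M ^+ 2 * w ^+ 3 - M * w ^+ 2) by ring.
by rewrite rpredB // dvdz_mulr.
Qed.

Lemma exp3_ndvd_exp2_add1 v t : odd t -> ~~ (3 %| t)%N ->
  ~~ ((3 : int) ^+ v.+2 %| 2 ^+ (3 ^ v * t) + 1)%Z.
Proof.
case: t => // t /= t_even t3.
have [w Hw w3] := exp2_exp3_add1 v.
set M : int := 3 ^+ v.+1.
have [q Hq] := exprDn_first_order (-1) M w t.
have -> : (2 : int) ^+ (3 ^ v * t.+1) + 1 = M * (t.+1%:R * w + M * q).
  have -> : (2 : int) ^+ (3 ^ v * t.+1) = (-1 + M * w) ^+ t.+1.
    by rewrite exprM; congr (_ ^+ _); apply/(addIr 1); rewrite Hw; ring.
  rewrite Hq -signr_odd -(signr_odd _ t) /= (negbTE t_even) expr0 expr1.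
  ring.
have M0 : M != 0 by rewrite expf_neq0.
rewrite exprS -/M (mulrC 3 M) dvdz_mul2l //; apply: contra t3 => dvd3.
have M3 : (3 %| M * q)%Z by rewrite /M exprS -mulrA dvdz_mulr.
have : (3 %| t.+1%:R * w)%Z by rewrite -(addrK (M * q) (_ * w)) rpredB.
rewrite dvdzE abszM Euclid_dvdM // => /orP[t'3|w'3]; first by rewrite (natz t.+1) in t'3.
by rewrite dvdzE w'3 in w3.
Qed.

End LiftingTheExponent.

Lemma odd_of_dvd3_exp2_add1 k : (3 %| 2 ^ k + 1)%N -> odd k.
Proof.
apply: contraLR => k_even.
rewrite -[k]odd_double_half (negbTE k_even) add0n -muln2 mulnC expnM.
by rewrite /dvdn -modnDml -modnXm exp1n.
Qed.

Lemma exp3S_dvd_exp2_add1 c k : (3 ^ c.+1 %| 2 ^ k + 1)%N -> (3 ^ c %| k)%N.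
Proof.
move=> dvd_c; have k_odd : odd k.
  by apply: odd_of_dvd3_exp2_add1; apply: dvdn_trans dvd_c; rewrite expnS dvdn_mulr.
have [t t_coprime Ek] := pfactor_coprime (isT : prime 3) (odd_gt0 k_odd).
move: Ek; set v := logn 3 k => Ek.
have [cv|vc] := leqP c v; first by rewrite Ek dvdn_mull // dvdn_exp2l.
have t_odd : odd t by move: k_odd; rewrite Ek oddM => /andP[].
have := exp3_ndvd_exp2_add1 v t_odd; rewrite -prime_coprime // t_coprime => /(_ isT).
have -> : ((3 : int) ^+ v.+2)%R = Posz (3 ^ v.+2) by rewrite -natz natrX.
have -> : ((2 : int) ^+ (3 ^ v * t) + 1)%R = Posz (2 ^ k + 1).
  by rewrite Ek mulnC -natz natrD natrX.
by rewrite dvdzE !absz_nat (dvdn_trans _ dvd_c) // dvdn_exp2l.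
Qed.

Lemma ltn_mul_exp2_exp3 k : 12 <= k -> 3 * k * (2 ^ k + 1) < 3 ^ k.-1.
Proof.
move=> k_ge12; rewrite -(subnKC k_ge12); elim: (k - 12) => [|m IHm]; first by vm_compute.
rewrite addnS /= expnS; move: IHm; set n := 12 + m.
have -> : 3 ^ n = 3 * 3 ^ n.-1 by rewrite -expnS prednK // addn_gt0.
rewrite expnS; move: (2 ^ n) (3 ^ n.-1) => a b; nia.
Qed.

Lemma exp3_eq_exp2_add1_le x y :
  3 ^ x + 2 * 3 ^ y = 2 ^ (x + y).+1 + 1 -> x + y <= 10.
Proof.
set k := (x + y).+1 => E.
have min_le : 3 ^ minn x y <= 3 * k.
  case min_eq : (minn x y) => [|c]; first by rewrite muln_gt0.
  have : 3 ^ c %| k.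
    apply: exp3S_dvd_exp2_add1; rewrite -min_eq -E dvdn_add ?dvdn_mull // dvdn_exp2l //.
      exact: geq_minl.
    exact: geq_minr.
  by move/(dvdn_leq (ltn0Sn _)); rewrite expnS leq_pmul2l.
have max_le : 3 ^ maxn x y <= 2 ^ k + 1.
  rewrite -E /maxn; case: ltnP => _; last exact: leq_addr.
  by rewrite mul2n -addnn addnA leq_addl.
rewrite leqNgt; apply/negP => xy_gt10.
have := @ltn_mul_exp2_exp3 k xy_gt10; rewrite ltnNge /= -addn_min_max expnD.
by rewrite leq_mul.
Qed.

Lemma moser3_nat_root_decomp k N :
    N * (2 ^ k.+1 + 1 - N) = 2 * 3 ^ k ->
  exists x y, [/\ x + y = k, 3 ^ x + 2 * 3 ^ y = 2 ^ k.+1 + 1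
                & N = 3 ^ x \/ N = 2 * 3 ^ y].
Proof.
set S := 2 ^ k.+1 + 1 => NSN.
have /andP[N_gt0 SN_gt0] : (0 < N) && (0 < S - N).
  by rewrite -muln_gt0 NSN muln_gt0 expn_gt0.
have cancelN m : N * m = 2 * 3 ^ k -> S - N = m.
  by move=> Em; apply/eqP; rewrite -(eqn_pmul2l N_gt0) NSN Em.
have sumS m : S - N = m -> N + m = S.
  by move<-; rewrite subnKC // ltnW // -subn_gt0.
have N_dvd : N %| 2 * 3 ^ k by rewrite -NSN dvdn_mulr.
have [N_odd|N_even] := boolP (odd N).
  rewrite Gauss_dvdr ?coprimen2 // in N_dvd.
  have [x x_le_k EN] := dvdn_pfactor _ _ (isT : prime 3) N_dvd.
  exists x, (k - x); rewrite subnKC //; split=> //; last by left.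
  by rewrite -EN; apply/sumS/cancelN; rewrite EN mulnCA -expnD subnKC.
have [M EN] : exists M, N = 2 * M.
  by exists N./2; rewrite -[LHS]odd_double_half (negbTE N_even) add0n -mul2n.
rewrite EN dvdn_pmul2l // in N_dvd.
have [y y_le_k EM] := dvdn_pfactor _ _ (isT : prime 3) N_dvd.
exists (k - y), y; rewrite subnK //; split=> //; last by right; rewrite EN EM.
rewrite addnC -EM -EN; apply/sumS/cancelN.
by rewrite EN EM -mulnA -expnD subnKC.
Qed.

Definition exp3_exp2_sols : seq (nat * nat) :=
  [:: (0, 0); (1, 0); (1, 1); (3, 1); (3, 5)].

Lemma exp3_eq_exp2_add1 x y :
  3 ^ x + 2 * 3 ^ y = 2 ^ (x + y).+1 + 1 -> (x, y) \in exp3_exp2_sols.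
Proof.
move=> E; have xy_le10 := exp3_eq_exp2_add1_le E.
have : all (fun x => all (fun y => (3 ^ x + 2 * 3 ^ y == 2 ^ (x + y).+1 + 1)
                                     ==> ((x, y) \in exp3_exp2_sols))
                         (iota 0 (11 - x)))
           (iota 0 11) by vm_compute.
move=> /allP/(_ x); rewrite mem_iota ltnS (leq_trans (leq_addr y x)) //.
by move=> /(_ isT)/allP/(_ y); rewrite mem_iota ltn_subRL ltnS E eqxx; apply.
Qed.

Lemma exp3_exp2_sols_le x y : (x, y) \in exp3_exp2_sols -> x + y <= 8.
Proof. exact: (allP (isT : all (fun p => p.1 + p.2 <= 8) exp3_exp2_sols)). Qed.

Local Open Scope ring_scope.

Lemma moser3E k : moser 3 k.+1 =
  2%:R^-1 *: ('X * ('X - 1)) - (2 ^ k)%:R *: 'X + (3 ^ k)%:R *: 1.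
Proof.
rewrite /moser /binpoly big_ltn // big_ltn // big_ltn // big_geq // subnn.
rewrite !big_ord_recr big_ord0 /= (_ : (3 - 1)%N = 2) // (_ : (3 - 2)%N = 1) //.
rewrite !factS fact0 -!mul_polyC !natrX expr1n sqrrN !expr1n mulN1r.
rewrite !(mul1r, muln1, invr1, subr0, polyC1, mulr1, addr0, polyCN).
ring.
Qed.

Lemma moser3_factor k (c d : nat) :
  (c + d = 2 ^ k.+1 + 1)%N -> (c * d = 2 * 3 ^ k)%N ->
  moser 3 k.+1 = 2%:R^-1 *: (('X - c%:R%:P) * ('X - d%:R%:P)).
Proof.
move=> cDd cMd; rewrite moser3E -!mul_polyC !polyC_natr.
have h2 : 2 * (2^-1 : rat)%:P = 1 by rewrite -polyC_natr -polyCM mulfV.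
have CD : c%:R + d%:R = 2 * (2 ^ k)%:R + 1 :> {poly rat}.
  by rewrite -natrD cDd natrD !natrX exprS.
have CM : c%:R * d%:R = 2 * (3 ^ k)%:R :> {poly rat} by rewrite -natrM cMd natrM.
apply/eqP; rewrite -subr_eq0; apply/eqP.
move: h2 CD CM; set h := (2^-1)%:P; set C := c%:R; set D := d%:R.
set A := (2 ^ k)%:R; set B := (3 ^ k)%:R => h2 CD CM.
transitivity ((2 * h - 1) * (A * 'X - B) + h * 'X * ((C + D) - (2 * A + 1))
              - h * (C * D - 2 * B)); first ring.
by rewrite h2 CD CM !subrr; ring.
Qed.

Lemma horner_moser3_eq0 k (x : rat) :
  ((moser 3 k.+1).[x] == 0) = (x * x + (2 * 3 ^ k)%:R == (2 ^ k.+1 + 1)%:R * x).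
Proof.
have -> : (moser 3 k.+1).[x] = 2^-1 * (x * x + (2 * 3 ^ k)%:R - (2 ^ k.+1 + 1)%:R * x).
  by rewrite moser3E !hornerE /= natrD natrM !natrX exprS; field.
by rewrite mulf_eq0 invr_eq0 pnatr_eq0 subr_eq0.
Qed.

Lemma horner_moser3_nat_eq0 k N :
  ((moser 3 k.+1).[N%:R] == 0) = (N * (2 ^ k.+1 + 1 - N) == 2 * 3 ^ k)%N.
Proof.
rewrite horner_moser3_eq0 -natrM -natrD -natrM eqr_nat.
have : (0 < 2 * 3 ^ k)%N by rewrite muln_gt0 expn_gt0.
move: (2 ^ k.+1 + 1)%N (2 * 3 ^ k)%N => S P P_gt0; apply/eqP/eqP => E; nia.
Qed.

Definition moser3_roots : seq (nat * nat) :=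
  [:: (3, 6); (5, 6); (5, 27); (9, 27); (9, 486)]%N.

Lemma moser3_root_le k N : (moser 3 k.+1).[N%:R] == 0 -> (k < 9)%N.
Proof.
rewrite horner_moser3_nat_eq0 => /eqP /moser3_nat_root_decomp[x [y [<- E _]]].
by rewrite ltnS exp3_exp2_sols_le // exp3_eq_exp2_add1 // E.
Qed.

Lemma moser3_nat_root k N : (3 < N)%N ->
  ((moser 3 k.+1).[N%:R] == 0) = ((k.+1, N) \in moser3_roots).
Proof.
move=> N_gt3; apply/idP/idP.
  rewrite horner_moser3_nat_eq0 => /eqP /moser3_nat_root_decomp[x [y [<- E EN]]].
  move: N_gt3; case: EN => ->; have := exp3_eq_exp2_add1 E;
  by rewrite !inE => /orP[|/orP[|/orP[|/orP[]]]] /eqP[-> ->].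
by rewrite horner_moser3_nat_eq0 !inE => /orP[|/orP[|/orP[|/orP[]]]] /eqP[-> ->].
Qed.

Theorem mainTheorem12 :
  (forall (k : nat) (n : int), (3 < n)%R -> (1 <= k)%N ->
     ((moser 3 k).[n%:~R] = 0 <->
      (k, n) \in [:: (3%N, 6%:Z); (5%N, 6%:Z); (5%N, 27%:Z); (9%N, 27%:Z); (9%N, 486%:Z)]))
  /\ (forall (k n : nat), (12 < k)%N -> (0 < n)%N -> (moser 3 k).[n%:R] != 0)
  /\ moser 3 5 = (2%:R)^-1 *: (('X - (6%:R)%:P) * ('X - (27%:R)%:P))
  /\ moser 3 9 = (2%:R)^-1 *: (('X - (27%:R)%:P) * ('X - (486%:R)%:P)).
Proof.
split.
  move=> [|k] [N|//] N_gt3 // _.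
  have -> : ((k.+1, Posz N) \in [:: (3%N, 6%:Z); (5%N, 6%:Z); (5%N, 27%:Z);
                                    (9%N, 27%:Z); (9%N, 486%:Z)])
            = ((k.+1, N) \in moser3_roots) by rewrite !inE.
  by rewrite -[N%:~R]/(N%:R) -moser3_nat_root //; split=> /eqP.
split.
  move=> [|k] N // k_gt12 _; apply/negP => /moser3_root_le.
  by move/(leq_trans k_gt12).
by split; apply: moser3_factor.
Qed.
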